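(* Let $b_1$ and $b_2$ be slowly varying functions satisfying $\lim_{t\to0^+}b_i(t)\in(0,\infty)$ for $i=1,2$. Then the function $b$ defined for $t\in(0,\infty)$ by \[b(t)=\begin{cases} b_2\!\left(\frac1t-1\right) & t<1,\\ 1 & t=1,\\ b_1(t-1) & t>1,\end{cases}\] is also slowly varying and satisfies $b(t)\approx b_2(1/t)$ for $t\in(0,1)$ and $b\approx b_1$ on $(1,\infty)$.
   Context: A measurable function $b:(0,\infty)\to(0,\infty)$ is called slowly varying if for every $\varepsilon>0$ there exist a non-decreasing function $b_\varepsilon$ and a non-increasing function $b_{-\varepsilon}$ on $(0,\infty)$ such that $t^{\varepsilon}b(t)\approx b_\varepsilon(t)$ and $t^{-\varepsilon}b(t)\approx b_{-\varepsilon}(t)$ on $(0,\infty)$, where $f\approx g$ on a set $A$ means $C^{-1}g(t)\le f(t)\le Cg(t)$ for all $t\in A$, for some constant $C\ge1$ independent of $t$. *)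

(* R : realType, functions R -> R, only their
   values on (0, +oo) matter. *)
From mathcomp Require Import all_boot all_order all_algebra.
From mathcomp Require Import all_classical all_reals all_analysis.
Import Order.TTheory GRing.Theory Num.Theory numFieldNormedType.Exports.
Local Open Scope classical_set_scope.
Local Open Scope ring_scope.

Definition approx_on {R : realType} (A : set R) (f g : R -> R) : Prop :=
  exists C : R, 1 <= C /\
    forall t, A t -> C^-1 * g t <= f t /\ f t <= C * g t.

Definition nondecreasing_on {R : realType} (A : set R) (f : R -> R) : Prop :=
  forall s t, A s -> A t -> s <= t -> f s <= f t.

Definition nonincreasing_on {R : realType} (A : set R) (f : R -> R) : Prop :=
  forall s t, A s -> A t -> s <= t -> f t <= f s.

Definition slowly_varying {R : realType} (b : R -> R) : Prop :=
  measurable_fun (`]0%R, +oo[ : set R) b /\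
  (forall t : R, 0 < t -> 0 < b t) /\
  forall eps : R, 0 < eps ->
    (exists bp : R -> R, nondecreasing_on `]0%R, +oo[ bp /\
        approx_on `]0%R, +oo[ (fun t => powR t eps * b t) bp) /\
    (exists bm : R -> R, nonincreasing_on `]0%R, +oo[ bm /\
        approx_on `]0%R, +oo[ (fun t => powR t (- eps) * b t) bm).

Definition glued_sv {R : realType} (b1 b2 : R -> R) (t : R) : R :=
  if t < 1 then b2 (t^-1 - 1) else if t == 1 then 1 else b1 (t - 1).

(* Write f ≍ g on A ([approx_on]) when f / g is bounded above and below on A.
   A positive b is slowly varying iff, for every ε > 0, t^ε b(t) is
   quasi-increasing and t^-ε b(t) quasi-decreasing (sup-envelopes give the
   monotone equivalents); both properties are invariant under ≍ and can be
   glued at a point, and t ↦ 1/t exchanges them, so t ↦ b2(1/t) is slowly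
   varying.  The glued function is ≍ b2(1/t) on (0,1) and ≍ b1 on (1,∞)
   because b(t - 1) ≍ b(t) on (1,∞): on (1,2] both stay between positive
   constants (limit at 0+ on (0,δ), the ε = 1 bound on [δ,2]), and for t ≥ 2
   the ε = 1 bound compares b at two points whose ratio is at most 2. *)

From mathcomp Require Import all_boot all_order all_algebra.
From mathcomp Require Import all_classical all_reals all_analysis.
From mathcomp Require Import ring lra measurable_realfun.
Import Order.TTheory GRing.Theory Num.Theory numFieldNormedType.Exports.
Local Open Scope classical_set_scope.
Local Open Scope ring_scope.

Section ApproxOn.
Context {R : realType}.
Implicit Types (A B : set R) (f g h : R -> R).

Lemma approx_onP A f g : (forall t, A t -> 0 <= g t) ->
  approx_on A f g <->
  exists2 C, 0 < C & forall t, A t -> f t <= C * g t /\ g t <= C * f t.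
Proof.
move=> g_ge0; split.
  move=> [C [C1 fg]]; have C0 : 0 < C by apply: lt_le_trans C1.
  by exists C => // t /fg[]; rewrite ler_pdivrMl.
move=> [C C0 fg]; exists (C + 1); split; first lra.
move=> t At; have [fC gC] := fg t At; have g0 := g_ge0 t At.
have f0 : 0 <= f t by rewrite -(pmulr_rge0 _ C0); apply: le_trans gC.
rewrite ler_pdivrMl; last lra.
split; lra.
Qed.

Lemma approx_on_eq A f g : (forall t, A t -> f t = g t) -> approx_on A f g.
Proof. by move=> fg; exists 1; split => // t /fg ->; rewrite invr1 !mul1r. Qed.

Lemma approx_on_trans A f g h :
  approx_on A f g -> approx_on A g h -> approx_on A f h.
Proof.
move=> [C [C1 fg]] [D [D1 gh]].
have [C0 D0] : 0 < C /\ 0 < D by split; apply: lt_le_trans ltr01 _.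
exists (C * D); split; first by rewrite -[1]mulr1 ler_pM.
move=> t At; have [] := fg t At; have [] := gh t At.
rewrite !ler_pdivrMl ?mulr_gt0 // => hg1 hg2 fg1 fg2.
split; nra.
Qed.

Lemma approx_onS A B f g : A `<=` B -> approx_on B f g -> approx_on A f g.
Proof. by move=> AB [C [C1 fg]]; exists C; split => // t /AB /fg. Qed.

Lemma approx_onU A B f g : (forall t, (A `|` B) t -> 0 <= g t) ->
  approx_on A f g -> approx_on B f g -> approx_on (A `|` B) f g.
Proof.
move=> g0 /approx_onP-/(_ (fun t At => g0 t (or_introl At)))[C C0 fgC].
move=> /approx_onP-/(_ (fun t Bt => g0 t (or_intror Bt)))[D D0 fgD].
apply/approx_onP => //; exists (C + D) => [|t ABt]; first exact: addr_gt0.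
have [E [E0 EC [fE gE]]] : exists E,
    [/\ 0 < E, E <= C + D & f t <= E * g t /\ g t <= E * f t].
  by case: ABt => [/fgC|/fgD] fg; [exists C | exists D]; split => //; lra.
have g0t := g0 t ABt.
have f0t : 0 <= f t by rewrite -(pmulr_rge0 _ E0) (le_trans g0t).
split; first exact: le_trans fE (ler_wpM2r g0t EC).
exact: le_trans gE (ler_wpM2r f0t EC).
Qed.

Lemma approx_on_comp A f g (phi : R -> R) :
  approx_on A f g -> approx_on (phi @^-1` A) (f \o phi) (g \o phi).
Proof. by move=> [C [C1 fg]]; exists C; split => // t /fg. Qed.

Lemma approx_onMl A f g h : (forall t, A t -> 0 <= h t) ->
  approx_on A f g -> approx_on A (fun t => h t * f t) (fun t => h t * g t).
Proof.
move=> h0 [C [C1 fg]]; exists C; split => // t At.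
by have [lo hi] := fg t At; split; rewrite mulrCA; apply: ler_wpM2l; rewrite ?h0.
Qed.

Lemma approx_on_gt0 A f g : approx_on A f g ->
  (forall t, A t -> 0 < g t) -> forall t, A t -> 0 < f t.
Proof.
move=> [C [C1 fg]] g0 t At; apply: lt_le_trans (fg t At).1.
by rewrite mulr_gt0 ?invr_gt0 ?g0 //; apply: lt_le_trans C1.
Qed.

Lemma approx_on_bounded A f g (m M : R) : 0 < m ->
  (forall t, A t -> m <= f t <= M /\ m <= g t <= M) -> approx_on A f g.
Proof.
move=> m0 fg_mM; apply/approx_onP => [t /fg_mM[_ /andP[mg _]]|].
  exact: le_trans (ltW m0) mg.
(* [`|M|] rather than [M]: nothing forces [M > 0] when [A] is empty. *)
pose C := (m + `|M|) / m; have C0 : 0 < C by rewrite divr_gt0 ?ltr_wpDr.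
have MC : M <= C * m by rewrite divfK ?gt_eqF // ler_wpDl ?ler_norm ?ltW.
exists C => // t /fg_mM[/andP[mf fM] /andP[mg gM]].
by split; [apply: le_trans fM (le_trans MC _) | apply: le_trans gM (le_trans MC _)];
  rewrite ler_pM2l.
Qed.

Lemma approx_on_set1 (c : R) f g : 0 < f c -> 0 < g c -> approx_on [set c] f g.
Proof.
move=> fc0 gc0.
apply: (approx_on_bounded _ _ _ (Num.min (f c) (g c)) (Num.max (f c) (g c))).
  by rewrite lt_min fc0.
by move=> _ ->; rewrite !ge_min !le_max !lexx !orbT.
Qed.

Lemma approx_onU1 A f g (c : R) : (forall t, A t -> 0 <= g t) ->
  0 < f c -> 0 < g c -> approx_on A f g -> approx_on (A `|` [set c]) f g.
Proof.
move=> g0 fc0 gc0 fg; apply: approx_onU fg (approx_on_set1 _ _ _ fc0 gc0).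
by move=> t [/g0|->] //; apply: ltW.
Qed.

End ApproxOn.

Section QuasiMonotone.
Context {R : realType}.
Implicit Types (A B : set R) (f g : R -> R).

Definition quasi_increasing_on A f :=
  exists2 C, 0 < C & forall s t, A s -> A t -> s <= t -> f s <= C * f t.

Definition quasi_decreasing_on A f :=
  exists2 C, 0 < C & forall s t, A s -> A t -> s <= t -> f t <= C * f s.

Lemma quasi_increasing_onS A B f :
  A `<=` B -> quasi_increasing_on B f -> quasi_increasing_on A f.
Proof. by move=> AB [C C0 fC]; exists C => // s t /AB As /AB; apply: fC. Qed.

Lemma quasi_decreasing_onS A B f :
  A `<=` B -> quasi_decreasing_on B f -> quasi_decreasing_on A f.
Proof. by move=> AB [C C0 fC]; exists C => // s t /AB As /AB; apply: fC. Qed.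

Lemma quasi_increasing_on_approx A f g :
  approx_on A f g -> quasi_increasing_on A g -> quasi_increasing_on A f.
Proof.
move=> [D [D1 fg]] [C C0 gC]; have D0 : 0 < D by apply: lt_le_trans D1.
exists (D * C * D); first by rewrite !mulr_gt0.
move=> s t As At st; have [_ fgs] := fg s As; have [+ _] := fg t At.
rewrite ler_pdivrMl // => gft; apply: le_trans fgs _.
rewrite -!mulrA ler_pM2l //; apply: le_trans (gC s t As At st) _.
by rewrite ler_pM2l.
Qed.

Lemma quasi_decreasing_on_approx A f g :
  approx_on A f g -> quasi_decreasing_on A g -> quasi_decreasing_on A f.
Proof.
move=> [D [D1 fg]] [C C0 gC]; have D0 : 0 < D by apply: lt_le_trans D1.
exists (D * C * D); first by rewrite !mulr_gt0.
move=> s t As At st; have [+ _] := fg s As; have [_ fgt] := fg t At.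
rewrite ler_pdivrMl // => gfs; apply: le_trans fgt _.
rewrite -!mulrA ler_pM2l //; apply: le_trans (gC s t As At st) _.
by rewrite ler_pM2l.
Qed.

Lemma quasi_increasing_on_glue (c : R) f : (forall t, 0 < t -> 0 <= f t) ->
  quasi_increasing_on `]0, c] f -> quasi_increasing_on `[c, +oo[ f ->
  quasi_increasing_on `]0, +oo[ f.
Proof.
move=> f0 [C C0 fC] [D D0 fD]; have CD0 := mulr_gt0 C0 D0.
exists (C + D + C * D); first by rewrite !addr_gt0.
move=> s t; rewrite /= !in_itv /= !andbT => s0 t0 st.
have weaken K : K <= C + D + C * D -> f s <= K * f t ->
    f s <= (C + D + C * D) * f t.
  by move=> KCD fK; apply: le_trans fK (ler_wpM2r (f0 t t0) KCD).
have [tc|ct] := leP t c.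
  apply: (weaken C); first lra.
  by apply: fC; rewrite //= !in_itv /= ?s0 ?t0 ?tc ?(le_trans st tc).
have [cs|sc] := leP c s.
  apply: (weaken D); first lra.
  by apply: fD; rewrite //= !in_itv /= ?andbT ?cs ?(le_trans cs st).
apply: (weaken (C * D)); first lra.
have c0 := lt_trans s0 sc.
have c_le : `]0, c]%classic c by rewrite /= in_itv /= c0 lexx.
have c_ge : `[c, +oo[%classic c by rewrite /= in_itv /= lexx.
apply: le_trans (fC s c _ c_le (ltW sc)) _.
  by rewrite /= in_itv /= s0 (ltW sc).
rewrite -mulrA ler_pM2l //; apply: fD c_ge _ (ltW ct).
by rewrite /= in_itv /= (ltW ct).
Qed.

Lemma quasi_decreasing_on_glue (c : R) f : (forall t, 0 < t -> 0 <= f t) ->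
  quasi_decreasing_on `]0, c] f -> quasi_decreasing_on `[c, +oo[ f ->
  quasi_decreasing_on `]0, +oo[ f.
Proof.
move=> f0 [C C0 fC] [D D0 fD]; have CD0 := mulr_gt0 C0 D0.
exists (C + D + C * D); first by rewrite !addr_gt0.
move=> s t; rewrite /= !in_itv /= !andbT => s0 t0 st.
have weaken K : K <= C + D + C * D -> f t <= K * f s ->
    f t <= (C + D + C * D) * f s.
  by move=> KCD fK; apply: le_trans fK (ler_wpM2r (f0 s s0) KCD).
have [tc|ct] := leP t c.
  apply: (weaken C); first lra.
  by apply: fC; rewrite //= !in_itv /= ?s0 ?t0 ?tc ?(le_trans st tc).
have [cs|sc] := leP c s.
  apply: (weaken D); first lra.
  by apply: fD; rewrite //= !in_itv /= ?andbT ?cs ?(le_trans cs st).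
apply: (weaken (D * C)); first lra.
have c0 := lt_trans s0 sc.
have c_le : `]0, c]%classic c by rewrite /= in_itv /= c0 lexx.
have c_ge : `[c, +oo[%classic c by rewrite /= in_itv /= lexx.
apply: le_trans (fD c t c_ge _ (ltW ct)) _.
  by rewrite /= in_itv /= (ltW ct).
rewrite -mulrA ler_pM2l //; apply: fC _ c_le (ltW sc).
by rewrite /= in_itv /= s0 (ltW sc).
Qed.

Lemma quasi_increasing_on_inv f : quasi_decreasing_on `]0, +oo[ f ->
  quasi_increasing_on `]0, +oo[ (fun t => f t^-1).
Proof.
move=> [C C0 fC]; exists C => // s t; rewrite /= !in_itv /= !andbT => s0 t0 st.
by apply: fC; rewrite /= ?in_itv /= ?andbT ?invr_gt0 ?lef_pV2 ?posrE.
Qed.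

Lemma quasi_decreasing_on_inv f : quasi_increasing_on `]0, +oo[ f ->
  quasi_decreasing_on `]0, +oo[ (fun t => f t^-1).
Proof.
move=> [C C0 fC]; exists C => // s t; rewrite /= !in_itv /= !andbT => s0 t0 st.
by apply: fC; rewrite /= ?in_itv /= ?andbT ?invr_gt0 ?lef_pV2 ?posrE.
Qed.

Lemma quasi_increasing_onP A f : (forall t, A t -> 0 < f t) ->
  quasi_increasing_on A f <->
  exists bp, nondecreasing_on A bp /\ approx_on A f bp.
Proof.
move=> f0; split; last first.
  move=> [bp [bp_nd fbp]]; apply: quasi_increasing_on_approx fbp _.
  by exists 1 => // s t As At st; rewrite mul1r; apply: bp_nd.
move=> [C C0 fC]; pose below t := f @` [set s | A s /\ s <= t].
have below_sup t : A t -> has_sup (below t).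
  move=> At; split; first by exists (f t), t.
  by exists (C * f t) => _ [s [As st] <-]; apply: fC.
have f_le_sup t : A t -> f t <= sup (below t).
  by move=> At; apply: (sup_upper_bound (below_sup t At)); exists t; first split.
exists (fun t => sup (below t)); split.
  move=> s t As At st; apply: ge_sup; first by exists (f s), s.
  move=> _ [u [Au us] <-]; apply: (sup_upper_bound (below_sup t At)).
  by exists u => //; split => //; apply: le_trans st.
apply/approx_onP => [t At|]; first exact: le_trans (ltW (f0 t At)) (f_le_sup t At).
exists (C + 1) => [|t At]; first lra.
have ft0 := f0 t At; have fs := f_le_sup t At.
have sC : sup (below t) <= C * f t.
  by apply: ge_sup; [exists (f t), t | move=> _ [s [As st] <-]; apply: fC].
split; nra.
Qed.

Lemma quasi_decreasing_onP A f : (forall t, A t -> 0 < f t) ->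
  quasi_decreasing_on A f <->
  exists bm, nonincreasing_on A bm /\ approx_on A f bm.
Proof.
move=> f0; split; last first.
  move=> [bm [bm_ni fbm]]; apply: quasi_decreasing_on_approx fbm _.
  by exists 1 => // s t As At st; rewrite mul1r; apply: bm_ni.
move=> [C C0 fC]; pose above t := f @` [set s | A s /\ t <= s].
have above_sup t : A t -> has_sup (above t).
  move=> At; split; first by exists (f t), t.
  by exists (C * f t) => _ [s [As ts] <-]; apply: fC.
have f_le_sup t : A t -> f t <= sup (above t).
  by move=> At; apply: (sup_upper_bound (above_sup t At)); exists t; first split.
exists (fun t => sup (above t)); split.
  move=> s t As At st; apply: ge_sup; first by exists (f t), t.
  move=> _ [u [Au tu] <-]; apply: (sup_upper_bound (above_sup s As)).
  by exists u => //; split => //; apply: le_trans tu.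
apply/approx_onP => [t At|]; first exact: le_trans (ltW (f0 t At)) (f_le_sup t At).
exists (C + 1) => [|t At]; first lra.
have ft0 := f0 t At; have fs := f_le_sup t At.
have sC : sup (above t) <= C * f t.
  by apply: ge_sup; [exists (f t), t | move=> _ [s [As ts] <-]; apply: fC].
split; nra.
Qed.

End QuasiMonotone.

Lemma powRV (R : realType) (x r : R) : 0 < x -> x^-1 `^ r = (x `^ r)^-1.
Proof.
move=> x0; have : (x * x^-1) `^ r = 1 by rewrite mulfV ?gt_eqF // powR1.
rewrite powRM ?ltW ?invr_gt0 // => xVx.
by rewrite -[LHS]mul1r -(@mulVf _ (x `^ r)) ?gt_eqF ?powR_gt0 // -mulrA xVx mulr1.
Qed.

Section SlowlyVarying.
Context {R : realType}.
Implicit Types (b f g h : R -> R).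

Lemma slowly_varyingP b : slowly_varying b <->
  [/\ measurable_fun (`]0%R, +oo[ : set R) b, forall t, 0 < t -> 0 < b t &
      forall eps, 0 < eps ->
        quasi_increasing_on `]0%R, +oo[ (fun t => t `^ eps * b t) /\
        quasi_decreasing_on `]0%R, +oo[ (fun t => t `^ (- eps) * b t)].
Proof.
have pos e : (forall t, 0 < t -> 0 < b t) ->
    forall t, `]0%R, +oo[%classic t -> 0 < t `^ e * b t.
  by move=> b0 t; rewrite /= in_itv /= andbT => t0; rewrite mulr_gt0 ?powR_gt0 ?b0.
split=> [[mb [b0 sv]]|[mb b0 sv]].
  split => // eps /sv[bI bD]; split.
    exact/(quasi_increasing_onP _ _ (pos eps b0)).
  exact/(quasi_decreasing_onP _ _ (pos (- eps) b0)).
split => //; split => // eps /sv[bI bD]; split.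
  exact/(quasi_increasing_onP _ _ (pos eps b0)).
exact/(quasi_decreasing_onP _ _ (pos (- eps) b0)).
Qed.

Lemma slowly_varying_potter b : slowly_varying b ->
  exists2 C, 0 < C & forall s t, 0 < s -> s <= t ->
    b s <= C * (t / s) * b t /\ b t <= C * (t / s) * b s.
Proof.
move=> /slowly_varyingP[_ b0 /(_ 1 ltr01)[[C C0 bC] [D D0 bD]]].
exists (C + D) => [|s t s0 st]; first exact: addr_gt0.
have t0 := lt_le_trans s0 st.
have [s_in t_in] : `]0, +oo[%classic s /\ `]0, +oo[%classic t.
  by rewrite /= !in_itv /= s0 t0.
have := bC s t s_in t_in st; have := bD s t s_in t_in st.
rewrite (powRr1 (ltW s0)) (powRr1 (ltW t0)).
rewrite (powR_inv1 (ltW s0)) (powR_inv1 (ltW t0)) => lo hi.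
have bs0 := b0 s s0; have bt0 := b0 t t0.
have -> : (C + D) * (t / s) * b t = s^-1 * ((C + D) * (t * b t)).
  by field; rewrite gt_eqF.
have -> : (C + D) * (t / s) * b s = t * ((C + D) * (s^-1 * b s)).
  by field; rewrite gt_eqF.
have weaken X : 0 < X -> C * X <= (C + D) * X /\ D * X <= (C + D) * X.
  by move=> X0; rewrite !ler_pM2r // lerDl lerDr !ltW.
split.
  rewrite ler_pdivlMl //; apply: le_trans hi (weaken _ _).1.
  by rewrite mulr_gt0.
rewrite -ler_pdivrMl //; apply: le_trans lo (weaken _ _).2.
by rewrite mulr_gt0 ?invr_gt0.
Qed.

Lemma slowly_varying_bounded b (l a : R) : slowly_varying b ->
  0 < l -> b x @[x --> 0^'+] --> l -> 0 < a ->
  exists2 m, 0 < m & exists M, forall t, 0 < t <= a -> m <= b t <= M.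
Proof.
move=> svb l0 bl a0; have /slowly_varyingP[_ b0 _] := svb.
have [d d0 near_l] : exists2 d, 0 < d &
    forall t, 0 < t -> t < d -> l / 2 <= b t <= 3 * l / 2.
  have /cvgrPdist_lt/(_ (l / 2)) := bl.
  rewrite divr_gt0 // => /(_ isT)[d /= d0 lt_d].
  exists d => // t t0 td; have := lt_d t; rewrite /= sub0r normrN gtr0_norm //.
  by move=> /(_ td t0); rewrite ltr_distlC => /andP[? ?]; apply/andP; split; lra.
have [C C0 potter] := slowly_varying_potter _ svb.
pose K := C * (a / d); have K0 : 0 < K by rewrite !mulr_gt0 ?invr_gt0.
exists (Num.min (l / 2) (b a / K)); first by rewrite lt_min !divr_gt0 ?b0.
exists (Num.max (3 * l / 2) (K * b a)) => t /andP[t0 ta].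
have [td|dt] := ltP t d.
  by have /andP[lo hi] := near_l t t0 td; rewrite ge_min le_max lo hi.
have [bt_le ba_le] := potter t a t0 ta.
have atK : C * (a / t) <= K by rewrite ler_pM2l // ler_pM2l // lef_pV2 ?posrE.
rewrite ge_min le_max; apply/andP; split; apply/orP; right.
  by rewrite ler_pdivrMr // mulrC; apply: le_trans ba_le _; rewrite ler_pM2r ?b0.
by apply: le_trans bt_le _; rewrite ler_pM2r ?b0.
Qed.

Lemma slowly_varying_shift b (l : R) : slowly_varying b -> 0 < l ->
  b x @[x --> 0^'+] --> l -> approx_on `]1, +oo[ (fun t => b (t - 1)) b.
Proof.
move=> svb l0 bl; have /slowly_varyingP[_ b0 _] := svb.
apply: (@approx_onS _ _ (`]1, 2] `|` `[2, +oo[)).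
  move=> t; rewrite /= !in_itv /= andbT => t1.
  by have [t2|t2] := leP t 2; [left | right]; rewrite /= ?t1 ?t2 ?(ltW t2).
apply: approx_onU.
- move=> t [|]; rewrite /= in_itv /= => /andP[t1 _]; apply/ltW/b0; lra.
- have [m m0 [M bmM]] := slowly_varying_bounded _ _ _ svb l0 bl (ltr0Sn _ 1).
  apply: approx_on_bounded m0 _ => t; rewrite /= in_itv /= => /andP[t1 t2].
  by split; apply: bmM; apply/andP; split; lra.
have [C C0 potter] := slowly_varying_potter _ svb.
apply/approx_onP => [t|].
  by rewrite /= in_itv /= andbT => t2; apply/ltW/b0; lra.
exists (C * 2) => [|t]; first by rewrite mulr_gt0.
rewrite /= in_itv /= andbT => t2.
have [lo hi] := potter (t - 1) t ltac:(lra) ltac:(lra).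
have ratio : C * (t / (t - 1)) <= C * 2.
  by rewrite ler_pM2l // ler_pdivrMr; lra.
by split; [apply: le_trans lo _ | apply: le_trans hi _];
  rewrite ler_pM2r ?b0 //; lra.
Qed.

Lemma open_continuous_measurable_comp (D E : set R) f (phi : R -> R) :
  open D -> {in D, continuous phi} -> phi @` D `<=` E -> measurable E ->
  measurable_fun E f -> measurable_fun D (f \o phi).
Proof.
move=> oD cphi DE mE mf; apply: measurable_comp mE DE mf _.
exact: open_continuous_measurable_fun.
Qed.

Lemma slowly_varying_inv b : slowly_varying b -> slowly_varying (fun t => b t^-1).
Proof.
move=> /slowly_varyingP[mb b0 qmb]; apply/slowly_varyingP; split.
- apply: (open_continuous_measurable_comp _ _ b _ (rray_open _) _ _ _ mb) => //.
    move=> t; rewrite inE /= in_itv /= andbT => t0.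
    by apply: inv_continuous; rewrite gt_eqF.
  by move=> _ [t + <-]; rewrite /= !in_itv /= !andbT invr_gt0.
- by move=> t t0; rewrite b0 ?invr_gt0.
move=> eps /qmb[bI bD]; split.
  apply: quasi_increasing_on_approx (quasi_increasing_on_inv _ bD).
  apply: approx_on_eq => t; rewrite /= in_itv /= andbT => t0.
  by rewrite powRV // powRN invrK.
apply: quasi_decreasing_on_approx (quasi_decreasing_on_inv _ bI).
apply: approx_on_eq => t; rewrite /= in_itv /= andbT => t0.
by rewrite powRV // powRN.
Qed.

Lemma slowly_varying_glue (c : R) f g h : 0 < c -> 0 < h c ->
  slowly_varying f -> slowly_varying g ->
  measurable_fun (`]0%R, +oo[ : set R) h ->
  approx_on `]0, c[ h f -> approx_on `]c, +oo[ h g -> slowly_varying h.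
Proof.
move=> c0 hc0 /slowly_varyingP[_ f0 qmf] /slowly_varyingP[_ g0 qmg] mh hf hg.
have below : `]0, c] `<=` `]0, +oo[.
  by move=> t; rewrite /= !in_itv /= andbT => /andP[].
have above : `[c, +oo[ `<=` `]0, +oo[.
  by move=> t; rewrite /= !in_itv /= !andbT; apply: lt_le_trans.
have {}hf : approx_on `]0, c] h f.
  rewrite -(setUitv1 true) ?bnd_simp //.
  apply: approx_onU1 hf => [t||]; rewrite ?f0 //.
  by rewrite /= in_itv /= => /andP[t0 _]; rewrite ltW ?f0.
have {}hg : approx_on `[c, +oo[ h g.
  rewrite -(setU1itv false) // setUC.
  apply: approx_onU1 hg => [t||]; rewrite ?g0 //.
  by rewrite /= in_itv /= andbT => ct; rewrite ltW ?g0 ?(lt_trans c0).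
have h0 t : 0 < t -> 0 < h t.
  move=> t0; have [tc|ct] := leP t c.
    apply: (approx_on_gt0 _ _ _ hf); last by rewrite /= in_itv /= t0.
    by move=> s /below; rewrite /= in_itv /= andbT; apply: f0.
  apply: (approx_on_gt0 _ _ _ hg); last by rewrite /= in_itv /= ltW.
  by move=> s /above; rewrite /= in_itv /= andbT; apply: g0.
have pow_ge0 (A : set R) e : forall t, A t -> 0 <= t `^ e.
  by move=> *; apply: powR_ge0.
have hf_pow e := approx_onMl _ _ _ _ (pow_ge0 _ e) hf.
have hg_pow e := approx_onMl _ _ _ _ (pow_ge0 _ e) hg.
have h_pow_ge0 e t : 0 < t -> 0 <= t `^ e * h t.
  by move=> t0; rewrite mulr_ge0 ?powR_ge0 ?ltW ?h0.
apply/slowly_varyingP; split => // eps eps0.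
have [[fI fD] [gI gD]] := (qmf eps eps0, qmg eps eps0).
split.
  apply: (quasi_increasing_on_glue c); first exact: h_pow_ge0.
    apply: quasi_increasing_on_approx (hf_pow _) _.
    exact: quasi_increasing_onS below fI.
  apply: quasi_increasing_on_approx (hg_pow _) _.
  exact: quasi_increasing_onS above gI.
apply: (quasi_decreasing_on_glue c); first exact: h_pow_ge0.
  apply: quasi_decreasing_on_approx (hf_pow _) _.
  exact: quasi_decreasing_onS below fD.
apply: quasi_decreasing_on_approx (hg_pow _) _.
exact: quasi_decreasing_onS above gD.
Qed.

Lemma measurable_glued_sv b1 b2 :
  measurable_fun (`]0%R, +oo[ : set R) b1 ->
  measurable_fun (`]0%R, +oo[ : set R) b2 ->
  measurable_fun (`]0%R, +oo[ : set R) (glued_sv b1 b2).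
Proof.
move=> mb1 mb2.
have m_lt1 : measurable_fun (`]0%R, 1[%classic : set R) (glued_sv b1 b2).
  apply: (eq_measurable_fun (b2 \o (fun t => t^-1 - 1))).
    by move=> t; rewrite inE /= in_itv /= => /andP[_ t1]; rewrite /glued_sv t1.
  apply: (open_continuous_measurable_comp _ _ b2 _ (itv_open _ _) _ _ _ mb2) => //.
    move=> t; rewrite inE /= in_itv /= => /andP[t0 _].
    apply: continuousB; last exact: cst_continuous.
    by apply: inv_continuous; rewrite gt_eqF.
  move=> _ [t + <-]; rewrite /= !in_itv /= andbT => /andP[t0 t1].
  by rewrite subr_gt0 invf_gt1.
have m_at1 : measurable_fun [set 1 : R] (glued_sv b1 b2).
  apply: (eq_measurable_fun (cst (1 : R))); last exact: measurable_cst.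
  by move=> t; rewrite inE /= => ->; rewrite /glued_sv ltxx eqxx.
have m_gt1 : measurable_fun (`]1, +oo[%classic : set R) (glued_sv b1 b2).
  apply: (eq_measurable_fun (b1 \o (fun t => t - 1))).
    move=> t; rewrite inE /= in_itv /= andbT => t1.
    by rewrite /glued_sv ltNge (ltW t1) /= gt_eqF.
  apply: (open_continuous_measurable_comp _ _ b1 _ (rray_open _) _ _ _ mb1) => //.
    by move=> t _; apply: continuousB; [exact: cvg_id | exact: cst_continuous].
  by move=> _ [t + <-]; rewrite /= !in_itv /= !andbT subr_gt0.
have -> : (`]0%R, +oo[%classic : set R) =
    `]0, 1[%classic `|` ([set 1] `|` `]1, +oo[%classic).
  apply/seteqP; split => t /=; rewrite !in_itv /= ?andbT.
    move=> t0; have [t1|t1|->] := ltgtP t 1.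
    - by left; apply/andP.
    - by right; right.
    - by right; left.
  by move=> [/andP[]|[->|/(lt_trans ltr01)]].
apply/measurable_funU; [exact: measurable_itv | | split => //].
  by apply: measurableU; [exact: measurable_set1 | exact: measurable_itv].
by apply/measurable_funU.
Qed.

End SlowlyVarying.

Theorem lemma3p6 (R : realType) (b1 b2 : R -> R) (l1 l2 : R) :
  slowly_varying b1 -> slowly_varying b2 ->
  0 < l1 -> (b1 x @[x --> 0^'+] --> l1) ->
  0 < l2 -> (b2 x @[x --> 0^'+] --> l2) ->
  slowly_varying (glued_sv b1 b2) /\
  approx_on (`]0%R, 1[ : set R) (glued_sv b1 b2) (fun t => b2 t^-1) /\
  approx_on (`]1%R, +oo[ : set R) (glued_sv b1 b2) b1.
Proof.
move=> sv1 sv2 l10 c1 l20 c2.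
have lt1 : approx_on `]0, 1[ (glued_sv b1 b2) (fun t => b2 t^-1).
  apply: approx_on_trans (approx_onS _ _ _ _ _ (approx_on_comp _ _ _ GRing.inv
    (slowly_varying_shift _ _ sv2 l20 c2))).
    apply: approx_on_eq => t; rewrite /= in_itv /= => /andP[_ t1].
    by rewrite /glued_sv t1.
  by move=> t; rewrite /= !in_itv /= andbT => /andP[t0 t1]; rewrite invf_gt1.
have gt1 : approx_on `]1, +oo[ (glued_sv b1 b2) b1.
  apply: approx_on_trans (slowly_varying_shift _ _ sv1 l10 c1).
  apply: approx_on_eq => t; rewrite /= in_itv /= andbT => t1.
  by rewrite /glued_sv ltNge (ltW t1) /= gt_eqF.
split=> //.
have sv2V := slowly_varying_inv _ sv2.
apply: (slowly_varying_glue _ _ _ _ ltr01 _ sv2V sv1 _ lt1 gt1).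
  by rewrite /glued_sv ltxx eqxx.
exact: measurable_glued_sv sv1.1 sv2.1.
Qed.
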